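(* (i) Every twofold partition having a representation in Model $F^{u}$ has a representation in Model $F^{c}$, and there exist a finite product set $X$ and a twofold partition of $X$ (satisfying the standing assumptions) that has a representation in Model $F^{c}$ but none in Model $F^{u}$. (ii) Every twofold partition having a representation in Model $F$ has a representation in Model $E$, and there exist a finite product set $X$ and a twofold partition of $X$ (satisfying the standing assumptions) that has a representation in Model $E$ but none in Model $F$.
   Context: Setting. $N=\{1,\dots,n\}$, $n\ge 2$; $X=X_1\times\dots\times X_n$ with each $X_i$ finite. $(y_i,x_{-i})$ denotes $x$ with $i$-th coordinate replaced by $y_i$. A twofold partition $\langle\mathcal A,\mathcal U\rangle$ of $X$: disjoint, union $X$. Standing assumptions: every attribute $i$ is influential (exist $x_i,y_i,a_{-i}$ with $(x_i,a_{-i})\in\mathcal A$, $(y_i,a_{-i})\in\mathcal U$), and $\succsim_i$ on $X_i$, defined by $x_i\succsim_i y_i$ iff [for all $a_{-i}$, $(y_i,a_{-i})\in\mathcal A\Rightarrow(x_i,a_{-i})\in\mathcal A$], is antisymmetric. Semiorders: a semiorder on $Y$ is a reflexive, Ferrers ($xSy, zSw\Rightarrow xSw$ or $zSy$) and semitransitive ($xSy, ySz\Rightarrow xSw$ or $wSz$) relation; its induced weak order is $x S^{wo} y$ iff for all $z$, [$ySz\Rightarrow xSz$] and [$zSx\Rightarrow zSy$]. Common data of Models $E$ and $F$: for each $i$ a semiorder $S_i$ on $X_i$ (asymmetric part $P_i$) and a semiorder $U_i$ whose asymmetric part $V_i\subseteq P_i$, with $S_i^{wo}\cap U_i^{wo}$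 complete; an up-closed family $\mathcal F\subseteq 2^N$ ($I\in\mathcal F$, $I\subseteq J\Rightarrow J\in\mathcal F$); the relation $xSy$ iff $\{i:x_iS_iy_i\}\in\mathcal F$ and $\{i:y_iV_ix_i\}=\varnothing$, with asymmetric part $P$; a set $\mathcal P\subseteq X$ with no $p,q\in\mathcal P$ satisfying $pPq$. Model $E$: for all $x$, $x\in\mathcal A$ iff [$xSp$ for some $p\in\mathcal P$ and not $qPx$ for all $q\in\mathcal P$]. Model $F$: for all $x$, $x\in\mathcal U$ iff [$pPx$ for some $p\in\mathcal P$ and not $xPq$ for all $q\in\mathcal P$]. $F^{c}$: $F$ with a representation where all $V_i$ are empty; $F^{u}$: $F^{c}$ with a representation where moreover $\mathcal F=\{N\}$. *)

From mathcomp Require Import all_boot.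
Set Implicit Arguments. Unset Strict Implicit. Unset Printing Implicit Defensive.

(* Attributes N = 'I_n, sets X_i = X i (finite types), X = product. *)
Definition prodX (n : nat) (X : 'I_n -> finType) := forall i : 'I_n, X i.

(* (y_i, x_{-i}) : x with i-th coordinate replaced by y_i *)
Definition upd (n : nat) (X : 'I_n -> finType) (x : prodX X) (i : 'I_n) (y : X i)
  : prodX X :=
  fun j => match i =P j with
           | ReflectT e => eq_rect i (fun k => X k) y j e
           | ReflectF _ => x j
           end.

(* A twofold partition <A, U> of X is given by A; U is its complement. *)
Section Partition.
Variables (n : nat) (X : 'I_n -> finType) (A : prodX X -> Prop).

Definition pref (i : 'I_n) (xi yi : X i) : Prop :=
  forall a : prodX X, A (@upd n X a i yi) -> A (@upd n X a i xi).

Definition influential (i : 'I_n) : Prop :=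
  exists (xi yi : X i) (a : prodX X), A (@upd n X a i xi) /\ ~ A (@upd n X a i yi).

Definition standing_assumptions : Prop :=
  (forall i, influential i) /\
  (forall i (xi yi : X i), pref xi yi -> pref yi xi -> xi = yi).
End Partition.

Section Semiorder.
Variable Y : Type.
Definition asym (S : rel Y) : rel Y := fun x y => S x y && ~~ S y x.
Definition semiorder (S : rel Y) : Prop :=
  [/\ (forall x, S x x),
      (forall x y z w, S x y -> S z w -> S x w \/ S z y) &
      (forall x y z w, S x y -> S y z -> S x w \/ S w z)].
Definition swo (S : rel Y) (x y : Y) : Prop :=
  forall z, (S y z -> S x z) /\ (S z x -> S z y).
End Semiorder.

Section Models.
Variables (n : nat) (X : 'I_n -> finType).

Definition gS (S U : forall i, rel (X i)) (F : pred {set 'I_n}) (x y : prodX X)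
  : bool :=
  F [set i | S i (x i) (y i)] && ([set i | asym (U i) (y i) (x i)] == set0).

Definition gP S U F (x y : prodX X) : bool :=
  gS S U F x y && ~~ gS S U F y x.

Definition common_data (S U : forall i, rel (X i)) (F : pred {set 'I_n})
  (Pset : prodX X -> Prop) : Prop :=
  (forall i, semiorder (S i)) /\
  [/\ (forall i, semiorder (U i)),
      (forall i x y, asym (U i) x y -> asym (S i) x y),
      (forall i (x y : X i),
          (swo (S i) x y /\ swo (U i) x y) \/ (swo (S i) y x /\ swo (U i) y x)),
      (forall I J : {set 'I_n}, F I -> I \subset J -> F J) &
      (forall p q, Pset p -> Pset q -> ~~ gP S U F p q)].

Definition model_E_cond S U F Pset (A : prodX X -> Prop) : Prop :=
  forall x, A x <->
    ((exists p, Pset p /\ gS S U F x p) /\ (forall q, Pset q -> ~~ gP S U F q x)).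

Definition model_F_cond S U F Pset (A : prodX X -> Prop) : Prop :=
  forall x, ~ A x <->
    ((exists p, Pset p /\ gP S U F p x) /\ (forall q, Pset q -> ~~ gP S U F x q)).

Definition rep_E (A : prodX X -> Prop) : Prop :=
  exists S U F Pset, common_data S U F Pset /\ model_E_cond S U F Pset A.

Definition rep_F (A : prodX X -> Prop) : Prop :=
  exists S U F Pset, common_data S U F Pset /\ model_F_cond S U F Pset A.

(* F^c : all V_i empty *)
Definition rep_Fc (A : prodX X -> Prop) : Prop :=
  exists S U F Pset, [/\ common_data S U F Pset,
    (forall i (x y : X i), ~~ asym (U i) x y) & model_F_cond S U F Pset A].

Definition rep_Fu (A : prodX X -> Prop) : Prop :=
  exists S U F Pset, [/\ common_data S U F Pset,
    (forall i (x y : X i), ~~ asym (U i) x y),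
    (forall I : {set 'I_n}, F I = (I == setT)) & model_F_cond S U F Pset A].
End Models.

(* On {0,1}^3 the partition
   A = x_2 /\ (x_0 \/ x_1) is in F^c, with S_i = >=, the all-true point as only profile and
   the concordance family {I | 2 \in I, I meets {0,1}}.  In F^u, unanimity and the absence of
   veto force S to be coordinatewise dominance; the profile that puts (1,1,0) outside A must
   then be (1,1,1), which beats (0,1,1) \in A, so (0,1,1) has to beat some profile q; but
   (1,1,1) beats q as well, although no profile may beat another.
   (ii) In model F two levels ranked alike by the weak orders of S_i and U_i are ranked alike
   by >=_i, so every >=_i is complete; and a partition with complete >=_i is in model E with
   S_i = >=_i, F = {N}, no veto and the minimal elements of A as profiles.  The up-set of
   {0,1,2}^3 generated by (2,2,0), (2,1,1), (1,1,2), (0,2,2) has complete >=_i but is not in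
   model F: S_i and U_i are determined by their values on the three pairs a < b, F by eight
   bits, and for each of these finitely many choices a pruning argument, run by computation,
   shows that no set of profiles can beat the four maximal points outside A. *)

From mathcomp Require Import all_boot boolp.

Unset Printing Implicit Defensive.

Section Update.
Context {n : nat} {X : 'I_n -> finType}.
Implicit Types (x : prodX X) (i j : 'I_n).

Lemma upd_same x i (y : X i) : upd x y i = y.
Proof. by rewrite /upd; case: eqP => // e; rewrite (eq_irrelevance e erefl). Qed.

Lemma upd_other x i (y : X i) j : i != j -> upd x y j = x j.
Proof. by rewrite /upd; case: eqP. Qed.

Lemma upd_id x i : upd x (x i) = x.
Proof.
by apply: functional_extensionality_dep => j; rewrite /upd; case: eqP => // e; case: j / e.
Qed.

End Update.

Lemma upd_const n (T : finType) (x : prodX (fun _ : 'I_n => T)) i (y : T) j :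
  upd (i := i) x y j = if i == j then y else x j.
Proof. by rewrite /upd; case: eqP => // e; case: j / e. Qed.

Lemma set0_forall (T : finType) (P : pred T) : ([set x | P x] == set0) = [forall x, ~~ P x].
Proof.
apply/eqP/forallP => [P0 x | nP]; last by apply/setP => x; rewrite !inE (negbTE (nP x)).
by have := in_set0 x; rewrite -P0 inE => ->.
Qed.

Lemma setT_forall (T : finType) (P : pred T) : ([set x | P x] == setT) = [forall x, P x].
Proof.
apply/eqP/forallP => [PT x | allP]; last by apply/setP => x; rewrite !inE allP.
by have := in_setT x; rewrite -PT inE.
Qed.

Lemma gS_trivial_U n (X : 'I_n -> finType) (S : forall i, rel (X i)) F x y :
  gS S (fun _ _ _ => true) F x y = F [set i | S i (x i) (y i)].
Proof.
rewrite /gS set0_forall.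
have -> : [forall i, ~~ asym (fun _ _ => true) (y i) (x i)] by apply/forallP.
exact: andbT.
Qed.

Section Preference.
Context {n : nat} {X : 'I_n -> finType}.
Variable A : prodX X -> Prop.

Lemma pref_refl i (a : X i) : pref A a a.
Proof. by []. Qed.

Lemma pref_trans i (a b c : X i) : pref A a b -> pref A b c -> pref A a c.
Proof. by move=> ab bc z /bc /ab. Qed.

Lemma not_pref_influential i (a b : X i) : ~ pref A b a -> influential A i.
Proof.
move=> /existsNP [z /not_implyP [Aa nAb]].
by exists a, b, z.
Qed.

Lemma standing_of_prefE (ge : forall i, rel (X i)) :
  (forall i (a b : X i), pref A a b <-> ge i a b) ->
  (forall i, antisymmetric (ge i)) ->
  (forall i, exists a b : X i, ~~ ge i b a) ->
  standing_assumptions A.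
Proof.
move=> prefE ge_anti ge_strict; split.
  move=> i; have [a [b nba]] := ge_strict i.
  by apply: (not_pref_influential i a b) => /prefE; apply/negP.
by move=> i a b /prefE ab /prefE ba; apply: ge_anti; rewrite ab ba.
Qed.

Implicit Types x y p q : prodX X.

Definition pref_ge x y := forall i, pref A (x i) (y i).

Lemma pref_ge_A x y : pref_ge x y -> A y -> A x.
Proof.
move=> xy Ay; pose mix s := foldr (fun i z => upd z (x i)) y s.
have mixE s j : mix s j = if j \in s then x j else y j.
  elim: s => [|i s IH] //=; rewrite in_cons.
  case: (eqVneq i j) => [<-|ij]; first by rewrite upd_same.
  by rewrite upd_other // IH.
have Amix s : A (mix s).
  elim: s => [|i s IH] //=.
  have xi : pref A (x i) (mix s i) by rewrite mixE; case: ifP => _; [exact: pref_refl | exact: xy].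
  by apply: xi; rewrite upd_id.
suff <- : mix (enum 'I_n) = x by [].
by apply: functional_extensionality_dep => j; rewrite mixE mem_enum.
Qed.

Definition min_A p := A p /\ forall q, A q -> pref_ge p q -> pref_ge q p.

Definition pref_rank x := \sum_i #|[set y : X i | `[< pref A (x i) y >]]|.

Lemma pref_rank_lt x q i : pref_ge x q -> ~ pref A (q i) (x i) -> pref_rank q < pref_rank x.
Proof.
move=> xq nqx.
have sub j : [set y | `[< pref A (q j) y >]] \subset [set y | `[< pref A (x j) y >]].
  by apply/subsetP => y; rewrite !inE => /asboolP qy; apply/asboolP; apply: pref_trans (xq j) qy.
rewrite /pref_rank (bigD1 i) //= [X in _ < X](bigD1 i) //= -addSn.
apply: leq_add; last by apply: leq_sum => j _; apply: subset_leq_card.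
apply: proper_card; rewrite properE sub /=; apply/subsetPn; exists (x i).
  by rewrite inE; apply/asboolP; apply: pref_refl.
by rewrite inE; apply/asboolP.
Qed.

Lemma min_A_below x : A x -> exists2 p, min_A p & pref_ge x p.
Proof.
have [m] := ubnP (pref_rank x); elim: m x => // m IH x /ltnSE rank_x Ax.
have [minx|nminx] := pselect (min_A x).
  by exists x => // i; apply: pref_refl.
have [q [Aq xq [i nqx]]] : exists q, [/\ A q, pref_ge x q & exists i, ~ pref A (q i) (x i)].
  apply: contrapT => none; apply: nminx; split => // q Aq xq i.
  by apply: contrapT => nqx; apply: none; exists q; split => //; exists i.
have [p minp qp] := IH q (leq_trans (pref_rank_lt _ _ _ xq nqx) rank_x) Aq.
by exists p => // j; apply: pref_trans (xq j) (qp j).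
Qed.

End Preference.

Arguments pref_refl {n X A i a}.
Arguments pref_trans {n X A i a b c}.
Arguments pref_ge_A {n X A x y}.
Arguments min_A_below {n X A x}.

Section ModelF.
Context {n : nat} {X : 'I_n -> finType}.
Variables (S U : forall i, rel (X i)) (F : pred {set 'I_n}).
Hypothesis F_up : forall I J : {set 'I_n}, F I -> I \subset J -> F J.

Implicit Types x y p q : prodX X.

Definition swo_ge x y :=
  forall j : 'I_n, swo (S j) (x j) (y j) /\ swo (U j) (x j) (y j).

Lemma gS_swo_ge x x' y y' :
  swo_ge x' x -> swo_ge y y' -> gS S U F x y -> gS S U F x' y'.
Proof.
move=> x'x yy' /andP [Fxy noveto]; apply/andP; split.
  apply: F_up Fxy _; apply/subsetP => j; rewrite !inE => Sxy.
  exact: ((yy' j).1 _).2 (((x'x j).1 _).1 Sxy).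
apply/eqP/setP => j; rewrite !inE; apply/negP => /andP [Uy'x' nUx'y'].
move/eqP/setP/(_ j): noveto; rewrite !inE => /negP; apply; apply/andP; split.
  exact: ((x'x j).2 _).2 (((yy' j).2 _).1 Uy'x').
by apply: contra nUx'y' => Uxy; exact: ((yy' j).2 _).2 (((x'x j).2 _).1 Uxy).
Qed.

Lemma gP_swo_ge x x' y y' :
  swo_ge x' x -> swo_ge y y' -> gP S U F x y -> gP S U F x' y'.
Proof.
move=> x'x yy' /andP [Sxy nSyx]; apply/andP; split; first exact: gS_swo_ge Sxy.
by apply: contra nSyx; apply: gS_swo_ge.
Qed.

Variables (Pset A : prodX X -> Prop).
Hypothesis repF : model_F_cond S U F Pset A.

Lemma rep_F_notA_swo_ge x y : swo_ge x y -> ~ A x -> ~ A y.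
Proof.
move=> xy /repF [[p [Pp pPx]] xPnone]; apply/repF; split.
  by exists p; split => //; apply: gP_swo_ge pPx.
move=> q Pq; apply: contra (xPnone q Pq); exact: gP_swo_ge.
Qed.

Lemma rep_F_pref i (a b : X i) : swo (S i) a b -> swo (U i) a b -> pref A a b.
Proof.
move=> Sab Uab z Ab; apply: contrapT => nAa; apply: rep_F_notA_swo_ge nAa Ab => j.
by case: (eqVneq i j) => [<-|ij]; rewrite ?upd_same ?upd_other.
Qed.

Hypothesis P_antichain : forall p q, Pset p -> Pset q -> ~~ gP S U F p q.

Lemma rep_F_profile_A p : Pset p -> A p.
Proof.
move=> Pp; apply: contrapT => /repF [[q [Pq qPp]] _].
by move: (P_antichain q p Pq Pp); rewrite qPp.
Qed.

End ModelF.

Arguments rep_F_pref {n X S U F} F_up {Pset A} repF {i a b}.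
Arguments rep_F_profile_A {n X S U F Pset A} repF P_antichain {p}.

Lemma rep_F_pref_total n (X : 'I_n -> finType) (A : prodX X -> Prop) :
  rep_F A -> forall i (a b : X i), pref A a b \/ pref A b a.
Proof.
move=> [S [U [F [P [[_ [_ _ swo_total F_up _]] repF]]]]] i a b.
case: (swo_total i a b) => [[Sab Uab]|[Sba Uba]].
  by left; exact (rep_F_pref F_up repF Sab Uab).
by right; exact (rep_F_pref F_up repF Sba Uba).
Qed.

Section CompletePreferences.
Context {n : nat} {X : 'I_n -> finType}.
Variable A : prodX X -> Prop.
Hypothesis pref_total : forall i (a b : X i), pref A a b \/ pref A b a.
Implicit Types x y p q : prodX X.

Definition prefS i : rel (X i) := fun a b => `[< pref A a b >].

Lemma gS_pref_ge x y :
  gS prefS (fun _ _ _ => true) (pred1 setT) x y <-> pref_ge A x y.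
Proof.
rewrite gS_trivial_U /= setT_forall.
split => [/forallP xy i | xy]; first by apply/asboolP; exact: xy.
by apply/forallP => i; apply/asboolP.
Qed.

Lemma rep_E_of_pref_total : rep_E A.
Proof.
exists prefS, (fun _ _ _ => true), (pred1 setT), (min_A A); split; last first.
  move=> x; split => [Ax | [[p [[Ap _] /gS_pref_ge xp]] _]]; last exact: pref_ge_A xp Ap.
  split; first by have [p minp xp] := min_A_below Ax; exists p; split => //; apply/gS_pref_ge.
  move=> q [Aq minq]; apply/negP => /andP [/gS_pref_ge qx /negP]; apply.
  by apply/gS_pref_ge; apply: minq.
split=> [i|]; last split.
- split=> [a|a b c d|a b c d]; rewrite /prefS; first by apply/asboolP; apply: pref_refl.
    move=> /asboolP ab /asboolP cd; case: (pref_total _ b d) => [bd|db].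
      by left; apply/asboolP; apply: pref_trans ab bd.
    by right; apply/asboolP; apply: pref_trans cd db.
  move=> /asboolP ab /asboolP bc; case: (pref_total _ a d) => [ad|da]; first by left; apply/asboolP.
  by right; apply/asboolP; apply: pref_trans da (pref_trans ab bc).
- by move=> i; split=> *; [|left|left].
- by move=> i a b; rewrite /asym.
- move=> i a b; have swo_pref c d : pref A c d -> swo (prefS i) c d.
    move=> cd z; rewrite /prefS; split => /asboolP h; apply/asboolP.
      exact: pref_trans cd h.
    exact: pref_trans h cd.
  by case: (pref_total _ a b) => [ab|ba]; [left|right]; split => //; apply: swo_pref.
- by move=> I J /eqP -> /=; rewrite subTset.
- move=> p q [Ap minp] [Aq _]; apply/negP => /andP [/gS_pref_ge pq /negP]; apply.
  by apply/gS_pref_ge; apply: minp.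
Qed.

End CompletePreferences.

Lemma rep_Fu_rep_Fc n (X : 'I_n -> finType) (A : prodX X -> Prop) : rep_Fu A -> rep_Fc A.
Proof. by move=> [S [U [F [P [data noV _ repF]]]]]; exists S, U, F, P. Qed.

Lemma rep_F_rep_E n (X : 'I_n -> finType) (A : prodX X -> Prop) : rep_F A -> rep_E A.
Proof. by move/rep_F_pref_total; apply: rep_E_of_pref_total. Qed.

Definition o0 : 'I_3 := @Ordinal 3 0 isT.
Definition o1 : 'I_3 := @Ordinal 3 1 isT.
Definition o2 : 'I_3 := @Ordinal 3 2 isT.

Lemma I3_cases (i : 'I_3) : [\/ i = o0, i = o1 | i = o2].
Proof. by case: i => [[|[|[|//]]] lti]; [apply: Or31|apply: Or32|apply: Or33]; apply: val_inj. Qed.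

Lemma forall_I3 (P : pred 'I_3) : [forall i, P i] = [&& P o0, P o1 & P o2].
Proof.
apply/forallP/and3P => [all_P|[P0 P1 P2] i]; first by split; apply: all_P.
by case: (I3_cases i) => ->.
Qed.

Definition tup3 {T : finType} (a b c : T) : prodX (fun _ : 'I_3 => T) :=
  fun i => nth a [:: a; b; c] i.

Definition Xb : 'I_3 -> finType := fun _ => bool.
Definition Ab (x : prodX Xb) : Prop := x o2 && (x o0 || x o1).

Lemma Ab_prefE (i : 'I_3) (a b : bool) : pref Ab (i := i) a b <-> (b ==> a).
Proof.
split; last first.
  move=> ba z; rewrite /Ab !upd_const.
  by case: a b ba => [] [] // _; case: (I3_cases i) => ->; case: (z o0); case: (z o1); case: (z o2).
case: a b => [] [] //; case: (I3_cases i) => ->.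
- by move/(_ (tup3 false false true)); rewrite /Ab !upd_const => /(_ isT).
- by move/(_ (tup3 false false true)); rewrite /Ab !upd_const => /(_ isT).
- by move/(_ (tup3 true true false)); rewrite /Ab !upd_const => /(_ isT).
Qed.

Definition ge_bool (i : 'I_3) : rel (Xb i) := fun a b => b ==> a.

Lemma Ab_standing : standing_assumptions Ab.
Proof.
apply: (standing_of_prefE _ ge_bool) => [i a b|i|i].
- exact: Ab_prefE.
- by move=> [] [].
- by exists true, false.
Qed.

Definition F_ab : pred {set 'I_3} := fun I => (o2 \in I) && ((o0 \in I) || (o1 \in I)).
Definition top_b : prodX Xb := fun _ => true.

Lemma Ab_rep_Fc : rep_Fc Ab.
Proof.
have top_gS x : gS ge_bool (fun _ _ _ => true) F_ab top_b x.
  by rewrite gS_trivial_U /F_ab !inE /ge_bool /top_b !implybT.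
have gS_top x : gS ge_bool (fun _ _ _ => true) F_ab x top_b = x o2 && (x o0 || x o1).
  by rewrite gS_trivial_U /F_ab !inE.
exists ge_bool, (fun _ _ _ => true), F_ab, (eq^~ top_b); split => //.
- split=> [i|]; last split.
  + by split=> [[]|[] [] [] []|[] [] [] []]; rewrite /ge_bool //=; auto.
  + by move=> i; split=> *; [|left|left].
  + by [].
  + by move=> i [] []; [left|left|right|left]; split=> -[]; rewrite /ge_bool.
  + move=> I J /andP [I2 I01] /subsetP IJ; rewrite /F_ab IJ //=.
    by case/orP: I01 => /IJ ->; rewrite ?orbT.
  + by move=> p q -> ->; rewrite /gP top_gS.
- move=> x; split => [nAx | [[p [-> /andP [_]]]]]; last by rewrite gS_top => /negP.
  split; first by exists top_b; split => //; rewrite /gP top_gS gS_top; apply/negP.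
  by move=> q ->; rewrite /gP top_gS andbF.
Qed.

Lemma Ab_rep_Fu_dominance (S U : forall i, rel (Xb i)) F P :
  common_data S U F P -> (forall i (a b : Xb i), ~~ asym (U i) a b) ->
  (forall I : {set 'I_3}, F I = (I == setT)) -> model_F_cond S U F P Ab ->
  forall x y, gS S U F x y = [forall i, y i ==> x i].
Proof.
move=> [semS [semU _ _ F_up _]] noV FN repF.
have U_total i (a b : bool) : U i a b.
  have [Urefl Uferrers _] := semU i.
  case: (Uferrers a a b b (Urefl a) (Urefl b)) => // Uba.
  by apply: contraNT (noV i b a) => nUab; rewrite /asym Uba.
have S_ge i (a b : bool) : S i a b = (b ==> a).
  have [Srefl Sferrers _] := semS i.
  have nS_ft : ~~ S i false true.
    apply/negP => S_ft; suff /Ab_prefE : pref Ab (i := i) false true by [].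
    apply: (rep_F_pref F_up repF) => z; split=> _; rewrite ?U_total //.
      by case: z; rewrite ?S_ft ?Srefl.
    by case: z; rewrite ?S_ft ?Srefl.
  have S_tf : S i true false.
    by case: (Sferrers true true false false (Srefl _) (Srefl _)) => // S_ft; case/negP: nS_ft.
  by case: a b => [] []; rewrite ?Srefl // (negbTE nS_ft).
move=> x y; rewrite /gS FN setT_forall set0_forall.
have -> : [forall i, ~~ asym (U i) (y i) (x i)] by apply/forallP => i; rewrite /asym !U_total.
by rewrite andbT; apply: eq_forallb => i; rewrite S_ge.
Qed.

Lemma Ab_not_rep_Fu : ~ rep_Fu Ab.
Proof.
move=> [S [U [F [P [data noV FN repF]]]]].
have gS_ge := Ab_rep_Fu_dominance _ _ _ _ data noV FN repF.
have [_ [_ _ _ _ antichain]] := data.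
have nAx0 : ~ Ab (tup3 true true false) by [].
have [[p [Pp pPx0]] _] := (repF (tup3 true true false)).1 nAx0.
have [p0 p1 p2] : [/\ p o0, p o1 & p o2].
  by move: pPx0; rewrite /gP !gS_ge !forall_I3 /=; case: (p o0); case: (p o1); case: (p o2).
have [q Pq x1Pq] : exists2 q, P q & gP S U F (tup3 false true true) q.
  apply: contrapT => none; apply: (repF (tup3 false true true)).2 isT; split.
    by exists p; split => //; rewrite /gP !gS_ge !forall_I3 /= p0 p1 p2.
  by move=> q Pq; apply/negP => x1Pq; apply: none; exists q.
move: (antichain p q Pp Pq) x1Pq; rewrite /gP !gS_ge !forall_I3 /= p0 p1 p2.
by case: (q o0); case: (q o1); case: (q o2).
Qed.

Definition X3 : 'I_3 -> finType := fun _ => 'I_3.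

Local Notation grades := ('I_3 * 'I_3 * 'I_3)%type.

Definition grades_of (x : prodX X3) : grades := (x o0, x o1, x o2).
Definition of_grades (t : grades) : prodX X3 := tup3 t.1.1 t.1.2 t.2.

Lemma of_gradesK : cancel of_grades grades_of.
Proof. by case=> [[a b] c]. Qed.

Lemma grades_ofK : cancel grades_of of_grades.
Proof. by move=> x; apply: functional_extensionality_dep => i; case: (I3_cases i) => ->. Qed.

Definition le_grades (s t : grades) : bool :=
  [&& s.1.1 <= t.1.1, s.1.2 <= t.1.2 & s.2 <= t.2].

Lemma le_grades_trans : transitive le_grades.
Proof.
move=> t s u /and3P [st1 st2 st3] /and3P [tu1 tu2 tu3].
by rewrite /le_grades (leq_trans st1 tu1) (leq_trans st2 tu2) (leq_trans st3 tu3).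
Qed.

Definition minA3 : seq grades := [:: (o2, o2, o0); (o2, o1, o1); (o1, o1, o2); (o0, o2, o2)].
Definition maxU3 : seq grades := [:: (o2, o1, o0); (o1, o2, o1); (o2, o0, o2); (o0, o1, o2)].

Definition A3b (t : grades) : bool := has (le_grades ^~ t) minA3.
Definition A3 (x : prodX X3) : Prop := A3b (grades_of x).

Lemma A3_pref_ge (i : 'I_3) (a b : 'I_3) : b <= a -> pref A3 (i := i) a b.
Proof.
move=> ba z /hasP [m minm mz]; apply/hasP; exists m => //; apply: le_grades_trans mz _.
by rewrite /le_grades /grades_of !upd_const; case: (I3_cases i) => -> /=; rewrite ?leqnn ?ba.
Qed.

(* Setting coordinate i of A3_witness i b to b lands in A3, to any a < b does not. *)
Definition A3_witness (i b : 'I_3) : grades :=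
  match nat_of_ord i, nat_of_ord b with
  | 0, 1 => (o0, o1, o2) | 0, _ => (o0, o1, o1)
  | 1, 1 => (o1, o0, o2) | 1, _ => (o0, o0, o2)
  | _, 1 => (o2, o1, o0) | _, _ => (o0, o2, o0)
  end.

Lemma A3_prefE (i : 'I_3) (a b : 'I_3) : pref A3 (i := i) a b <-> b <= a.
Proof.
split; last exact: A3_pref_ge.
move/(_ (of_grades (A3_witness i b))); rewrite /A3 /grades_of !upd_const.
by case: (I3_cases i) => ->; case: (I3_cases a) => ->; case: (I3_cases b) => -> //= /(_ isT).
Qed.

Lemma A3_standing : standing_assumptions A3.
Proof.
apply: (standing_of_prefE _ (fun i (a b : X3 i) => b <= a)) => [i a b|i a b|i].
- exact: A3_prefE.
- by rewrite -eqn_leq => /eqP /val_inj.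
- by exists o1, o0.
Qed.

Lemma A3_rep_E : rep_E A3.
Proof.
by apply: rep_E_of_pref_total => i a b; rewrite !A3_prefE; apply/orP; exact: leq_total.
Qed.

(* Profiles must beat every point of outside, and a point of inside beaten by a profile must
   beat a profile.  So no profile beats a point of inside that beats nothing in a set Q
   containing the profiles, and the points of Q that do can be pruned away. *)
Section PruningTest.
Variables (T : eqType) (R : rel T) (outside inside : seq T).

Definition prune (Q : seq T) : seq T :=
  let unsupported := [seq a <- inside | ~~ has (R a) Q] in
  [seq p <- Q | ~~ has (R p) unsupported].

Definition covers (Q : seq T) : bool := all (fun u => has (R^~ u) Q) outside.

(* The if, rather than &&, lets vm_compute stop at the first uncovered round. *)
Fixpoint survives k Q : bool :=
  if covers Q then (if k is k'.+1 then survives k' (prune Q) else true) else false.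

Variable profile : T -> Prop.
Hypothesis profile_cover : forall u, u \in outside -> exists2 p, profile p & R p u.
Hypothesis profile_support :
  forall a p, a \in inside -> profile p -> R p a -> exists2 q, profile q & R a q.

Lemma covers_profiles Q : (forall p, profile p -> p \in Q) -> covers Q.
Proof. by move=> QP; apply/allP => u /profile_cover [p /QP pQ pu]; apply/hasP; exists p. Qed.

Lemma prune_profiles Q : (forall p, profile p -> p \in Q) -> forall p, profile p -> p \in prune Q.
Proof.
move=> QP p Pp; rewrite mem_filter QP // andbT; apply/hasP => -[a].
rewrite mem_filter => /andP [/hasPn noq a_in] pa.
by have [q /QP qQ aq] := profile_support _ _ a_in Pp pa; move: (noq q qQ); rewrite aq.
Qed.

Lemma survives_profiles k Q : (forall p, profile p -> p \in Q) -> survives k Q.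
Proof.
elim: k Q => [|k IH] Q QP /=; rewrite covers_profiles //.
exact/IH/prune_profiles.
Qed.

End PruningTest.

Arguments survives {T}.
Arguments survives_profiles {T R outside inside} profile.

Definition triples {T : Type} (s : seq T) : seq (T * T * T) :=
  [seq (p, z) | p <- [seq (x, y) | x <- s, y <- s], z <- s].

Lemma mem_triples (T : eqType) (s : seq T) x y z :
  x \in s -> y \in s -> z \in s -> (x, y, z) \in triples s.
Proof.
move=> xs ys zs; apply/allpairsP; exists ((x, y), z); split => //=.
by apply/allpairsP; exists (x, y).
Qed.

Definition bool3s : seq (bool * bool * bool) := triples [:: false; true].

Lemma mem_bool3s b : b \in bool3s.
Proof. by case: b => [[[] []] []]. Qed.

(* A relation on 'I_3 containing >= is given by its values r on the pairs (0,1), (0,2), (1,2);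
   a criterion records these for S_i and for U_i. *)
Definition above (r : bool * bool * bool) (a b : 'I_3) : bool :=
  match nat_of_ord a, nat_of_ord b with
  | 0, 1 => r.1.1 | 0, 2 => r.1.2 | 1, 2 => r.2 | _, _ => true
  end.

Lemma above_ge r (a b : 'I_3) : b <= a -> above r a b.
Proof. by case: (I3_cases a) => ->; case: (I3_cases b) => ->. Qed.

Definition crit := ((bool * bool * bool) * (bool * bool * bool))%type.

(* Forced by the compatibility of S_i and U_i with the order of 'I_3 and by V_i \subset P_i. *)
Definition crit_ok (c : crit) : bool :=
  let: ((s01, s02, s12), (u01, u02, u12)) := c in
  [&& s02 ==> s01 && s12, u02 ==> u01 && u12, s01 ==> u01, s02 ==> u02 & s12 ==> u12].

Definition crits : seq crit := [seq c <- [seq (s, u) | s <- bool3s, u <- bool3s] | crit_ok c].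

Fixpoint bool_seqs k : seq (seq bool) :=
  if k is k'.+1 then [seq b :: s | b <- [:: false; true], s <- bool_seqs k'] else [:: [::]].

Lemma mem_bool_seqs s : s \in bool_seqs (size s).
Proof. by elim: s => [|b s IH] //; apply/allpairsP; exists (b, s); case: b. Qed.

(* A family of coalitions as its 8 membership bits, coalitions being listed as in bool3s. *)
Definition fam_at (v : seq bool) (b : bool * bool * bool) : bool :=
  if v is [:: v0; v1; v2; v3; v4; v5; v6; v7] then
    let: (b0, b1, b2) := b in
    if b0 then if b1 then (if b2 then v7 else v6) else (if b2 then v5 else v4)
    else if b1 then (if b2 then v3 else v2) else (if b2 then v1 else v0)
  else false.

Arguments fam_at : simpl never.

Definition le_bool3 (b b' : bool * bool * bool) : bool :=
  [&& b.1.1 ==> b'.1.1, b.1.2 ==> b'.1.2 & b.2 ==> b'.2].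

Definition up_closed3 (v : seq bool) : bool :=
  all (fun b => all (fun b' => le_bool3 b b' ==> fam_at v b ==> fam_at v b') bool3s) bool3s.

Definition fams : seq (seq bool) := [seq v <- bool_seqs 8 | up_closed3 v].

Definition gS3 (c : crit * crit * crit) (f : bool * bool * bool -> bool) (x y : grades) : bool :=
  let: (c0, c1, c2) := c in let: (x0, x1, x2) := x in let: (y0, y1, y2) := y in
  f (above c0.1 x0 y0, above c1.1 x1 y1, above c2.1 x2 y2) &&
  [&& above c0.2 x0 y0, above c1.2 x1 y1 & above c2.2 x2 y2].

Definition gP3 c f x y := gS3 c f x y && ~~ gS3 c f y x.

Definition A3pts : seq grades := [seq t <- triples [:: o0; o1; o2] | A3b t].

Lemma no_rep_F_config :
  all (fun v => all (fun c0 => all (fun c1 => all (fun c2 =>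
    ~~ survives (gP3 (c0, c1, c2) (fam_at v)) maxU3 minA3 4 A3pts) crits) crits) crits) fams.
Proof. by vm_compute. Qed.

Definition coalition (b : bool * bool * bool) : {set 'I_3} :=
  [set i : 'I_3 | nth false [:: b.1.1; b.1.2; b.2] i].

Lemma coalitionE (P : pred 'I_3) : [set i | P i] = coalition (P o0, P o1, P o2).
Proof. by apply/setP => i; rewrite !inE; case: (I3_cases i) => ->. Qed.

Lemma fam_atE (g : bool * bool * bool -> bool) b : fam_at [seq g b | b <- bool3s] b = g b.
Proof. by case: b => [[[] []] []]. Qed.

Lemma mem_ord3 (i : 'I_3) : i \in [:: o0; o1; o2].
Proof. by case: (I3_cases i) => ->. Qed.

Section A3Link.
Variables (S U : forall i : 'I_3, rel (X3 i)) (F : pred {set 'I_3}).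
Hypothesis swo_ge : forall i (a b : 'I_3), b <= a -> swo (S i) a b /\ swo (U i) a b.
Hypotheses (S_refl : forall i a, S i a a) (U_refl : forall i a, U i a a).
Hypothesis V_sub_P : forall i (a b : 'I_3), asym (U i) a b -> asym (S i) a b.
Hypothesis F_up : forall I J : {set 'I_3}, F I -> I \subset J -> F J.

Lemma S_ge {i} {a b : 'I_3} : b <= a -> S i a b.
Proof. by move=> ba; apply: ((swo_ge i a b ba).1 b).1 (S_refl i b). Qed.

Lemma U_ge {i} {a b : 'I_3} : b <= a -> U i a b.
Proof. by move=> ba; apply: ((swo_ge i a b ba).2 b).1 (U_refl i b). Qed.

Lemma asym_U i (a b : 'I_3) : asym (U i) b a = ~~ U i a b.
Proof.
by rewrite /asym; case: (leqP a b) => [ab | /ltnW ba]; [rewrite (U_ge ab) | rewrite (U_ge ba) andbF].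
Qed.

Definition crit_of i : crit :=
  ((S i o0 o1, S i o0 o2, S i o1 o2), (U i o0 o1, U i o0 o2, U i o1 o2)).

Lemma above_S i : above (S i o0 o1, S i o0 o2, S i o1 o2) =2 S i.
Proof.
move=> a b; case: (leqP b a) => [ba | ab]; first by rewrite above_ge // S_ge.
by move: ab; case: (I3_cases a) => ->; case: (I3_cases b) => ->.
Qed.

Lemma above_U i : above (U i o0 o1, U i o0 o2, U i o1 o2) =2 U i.
Proof.
move=> a b; case: (leqP b a) => [ba | ab]; first by rewrite above_ge // U_ge.
by move: ab; case: (I3_cases a) => ->; case: (I3_cases b) => ->.
Qed.

Lemma crit_of_in i : crit_of i \in crits.
Proof.
rewrite mem_filter; apply/andP; split; last first.
  by apply/allpairsP; exists ((crit_of i).1, (crit_of i).2); rewrite !mem_bool3s.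
have S_U (a b : 'I_3) : a <= b -> S i a b -> U i a b.
  move=> ab; apply: contraTT => nUab; move: (V_sub_P i b a); rewrite asym_U nUab.
  by move=> /(_ isT) /andP [].
rewrite /crit_of /crit_ok; apply/and5P; split; apply/implyP.
- by move=> S02; rewrite ((swo_ge i o2 o1 isT).1 o0).2 // ((swo_ge i o1 o0 isT).1 o2).1.
- by move=> U02; rewrite ((swo_ge i o2 o1 isT).2 o0).2 // ((swo_ge i o1 o0 isT).2 o2).1.
- exact: S_U.
- exact: S_U.
- exact: S_U.
Qed.

Definition fam_of : seq bool := [seq F (coalition b) | b <- bool3s].

Lemma fam_of_in : fam_of \in fams.
Proof.
rewrite mem_filter; have -> : bool_seqs 8 = bool_seqs (size fam_of) by rewrite size_map.
rewrite mem_bool_seqs andbT.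
apply/allP => b _; apply/allP => b' _; rewrite !fam_atE; apply/implyP => bb'.
apply/implyP => Fb; apply: F_up Fb _; apply/subsetP => i; rewrite !inE.
case: b b' bb' => [[b0 b1] b2] [[b0' b1'] b2'] /and3P /= [le0 le1 le2].
by case: i => [[|[|[|]]] //= _]; apply/implyP.
Qed.

Definition crits_of := (crit_of o0, crit_of o1, crit_of o2).

Lemma gS_gS3 t t' : gS S U F (of_grades t) (of_grades t') = gS3 crits_of (fam_at fam_of) t t'.
Proof.
case: t t' => [[a0 a1] a2] [[b0 b1] b2].
rewrite /gS /gS3 /= /fam_of fam_atE !above_S !above_U coalitionE set0_forall forall_I3 /=.
by rewrite !asym_U !negbK.
Qed.

Lemma gP_gP3 t t' : gP S U F (of_grades t) (of_grades t') = gP3 crits_of (fam_at fam_of) t t'.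
Proof. by rewrite /gP /gP3 !gS_gS3. Qed.

End A3Link.

Arguments crit_of_in {S U} swo_ge U_refl V_sub_P i.
Arguments fam_of_in {F} F_up.
Arguments gP_gP3 {S U} F swo_ge S_refl U_refl t t'.

Lemma A3_not_rep_F : ~ rep_F A3.
Proof.
move=> [S [U [F [P [[semS [semU V_sub_P swo_total F_up antichain]] repF]]]]].
have swo_ge i (a b : 'I_3) : b <= a -> swo (S i) a b /\ swo (U i) a b.
  move=> ba; case: (swo_total i a b) => // [[Sba Uba]].
  have /A3_prefE ab := rep_F_pref F_up repF Sba Uba.
  by have -> : a = b by apply/val_inj/eqP; rewrite eqn_leq ab ba.
have S_refl i a : S i a a by have [] := semS i.
have U_refl i a : U i a a by have [] := semU i.
have link := gP_gP3 F swo_ge S_refl U_refl.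
have := allP no_rep_F_config _ (fam_of_in F_up).
move=> /allP /(_ _ (crit_of_in swo_ge U_refl V_sub_P o0)).
move=> /allP /(_ _ (crit_of_in swo_ge U_refl V_sub_P o1)).
move=> /allP /(_ _ (crit_of_in swo_ge U_refl V_sub_P o2)) /negP; apply.
have /allP nA_max : all (negb \o A3b) maxU3 by [].
have /allP A_min : all A3b minA3 by [].
apply: (survives_profiles (P \o of_grades)) => [u u_in | a p a_in Pp pa | t Pt].
- have nAu : ~ A3 (of_grades u) by rewrite /A3 of_gradesK; apply/negP/nA_max.
  have [[p [Pp pu]] _] := (repF _).1 nAu.
  by exists (grades_of p); rewrite /= ?grades_ofK // -link grades_ofK.
- have Aa : A3 (of_grades a) by rewrite /A3 of_gradesK; apply: A_min.
  apply: contrapT => none; apply: (repF _).2 Aa; split.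
    by exists (of_grades p); split => //; rewrite link.
  move=> q Pq; apply/negP => aq; apply: none.
  by exists (grades_of q); rewrite /= ?grades_ofK // -link grades_ofK.
- have := rep_F_profile_A repF antichain Pt; rewrite /A3 of_gradesK mem_filter => ->.
  by case: t {Pt} => [[a b] c]; apply: mem_triples; apply: mem_ord3.
Qed.

Theorem proposition2 :
  ((forall (n : nat) (X : 'I_n -> finType) (A : prodX X -> Prop),
      2 <= n -> standing_assumptions A -> rep_Fu A -> rep_Fc A) /\
   (exists (n : nat) (X : 'I_n -> finType) (A : prodX X -> Prop),
      [/\ 2 <= n, standing_assumptions A, rep_Fc A & ~ rep_Fu A])) /\
  ((forall (n : nat) (X : 'I_n -> finType) (A : prodX X -> Prop),
      2 <= n -> standing_assumptions A -> rep_F A -> rep_E A) /\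
   (exists (n : nat) (X : 'I_n -> finType) (A : prodX X -> Prop),
      [/\ 2 <= n, standing_assumptions A, rep_E A & ~ rep_F A])).
Proof.
split; split.
- by move=> n X A _ _; apply: rep_Fu_rep_Fc.
- by exists 3, Xb, Ab; split; [| exact: Ab_standing | exact: Ab_rep_Fc | exact: Ab_not_rep_Fu].
- by move=> n X A _ _; apply: rep_F_rep_E.
- by exists 3, X3, A3; split; [| exact: A3_standing | exact: A3_rep_E | exact: A3_not_rep_F].
Qed.
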